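(* Fix integers $Q_1,Q_2\ge0$. Consider a single realization of the demand stream: a Poisson process of type-1 arrivals (rate $\lambda_1$) and an independent Poisson process of type-2 arrivals (rate $\lambda_2$), each type-$i$ arrival carrying an independent mark equal to $1$ with probability $p_{ij}$ ($j\ne i$) and $0$ otherwise. Run four inventory systems driven by this same stream, with initial stocks $(Q_1+1,Q_2+1)$, $(Q_1+1,Q_2)$, $(Q_1,Q_2+1)$, $(Q_1,Q_2)$, and denote their stock of product $i$ at time $t$ by $n_i^{(Q_1+1,Q_2+1)}(t)$, $n_i^{(Q_1+1,Q_2)}(t)$, $n_i^{(Q_1,Q_2+1)}(t)$, $n_i^{(Q_1,Q_2)}(t)$ respectively. Then for every $t\ge0$ and $i=1,2$, on every sample path, $$n_i^{(Q_1+1,Q_2+1)}(t)-n_i^{(Q_1+1,Q_2)}(t)\ \ge\ n_i^{(Q_1,Q_2+1)}(t)-n_i^{(Q_1,Q_2)}(t).$$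
   Context: Dynamics of one inventory system driven by the arrival stream: at a type-$i$ arrival (with $j\ne i$ the other product), if the stock of product $i$ is positive it decreases by one; otherwise, if the stock of product $j$ is positive and the arrival's mark is $1$, the stock of $j$ decreases by one; otherwise nothing changes. There is no replenishment. Under this construction each system's stock process is the inventory CTMC with rates $\lambda_1,\lambda_2$ in the interior, $\lambda_1+\lambda_2p_{21}$ on $\{(i_1,0)\}$, $\lambda_2+\lambda_1p_{12}$ on $\{(0,i_2)\}$, and $(0,0)$ absorbing. *)

From HB Require Import structures.
From mathcomp Require Import all_boot all_order all_algebra.
Set Implicit Arguments. Unset Strict Implicit. Unset Printing Implicit Defensive.
Import Order.TTheory GRing.Theory Num.Theory.

(* Products are indexed by bool: [false] = product 1, [true] = product 2.
   A state is the pair of stock levels (n_1, n_2). *)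
Definition stock (x : nat * nat) (i : bool) : nat := if i then x.2 else x.1.

Definition dec (x : nat * nat) (i : bool) : nat * nat :=
  if i then (x.1, x.2.-1) else (x.1.-1, x.2).

(* An arrival is (type i, mark m). *)
Definition step (x : nat * nat) (a : bool * bool) : nat * nat :=
  let: (i, m) := a in
  if 0 < stock x i then dec x i
  else if (0 < stock x (~~ i)) && m then dec x (~~ i) else x.

(* A sample path of the demand stream: the chronological list of arrivals
   (arrival time, (type, mark)).  Stock at time t starting from x0: apply the
   arrivals with arrival time <= t, in order. *)
Definition stock_at (R : realFieldType) (path : seq (R * (bool * bool)))
    (x0 : nat * nat) (t : R) : nat * nat :=
  foldl step x0 [seq e.2 | e <- path & (e.1 <= t)%R].

From HB Require Import structures.
From mathcomp Require Import all_boot all_order all_algebra.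
From mathcomp Require Import zify.
Import Order.TTheory GRing.Theory Num.Theory.
Local Open Scope ring_scope.

(* Coupled by the same arrivals, the systems started from (Q1+1,Q2+1),
   (Q1+1,Q2), (Q1,Q2+1) and (Q1,Q2) are always in one of the eight relative
   configurations of [square] (parametrized by the last state): this set is
   closed under [step], and each configuration satisfies the inequality. *)
Inductive square : nat * nat -> nat * nat -> nat * nat -> nat * nat -> Prop :=
  | square_interior d1 d2 :
      square (d1.+1, d2.+1) (d1.+1, d2) (d1, d2.+1) (d1, d2)
  | square_merged x : square x x x x
  | square_edge1 d1 : square (d1.+1, 0%N) (d1.+1, 0%N) (d1, 0%N) (d1, 0%N)
  | square_edge2 d2 : square (0%N, d2.+1) (0%N, d2) (0%N, d2.+1) (0%N, d2)
  | square_diag1 d1 : square (d1.+2, 0%N) (d1.+1, 0%N) (d1.+1, 0%N) (d1, 0%N)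
  | square_diag2 d2 : square (0%N, d2.+2) (0%N, d2.+1) (0%N, d2.+1) (0%N, d2)
  | square_corner1 : square (1, 0)%N (0, 0)%N (0, 0)%N (0, 0)%N
  | square_corner2 : square (0, 1)%N (0, 0)%N (0, 0)%N (0, 0)%N.

Lemma square_step A B C D a : square A B C D ->
  square (step A a) (step B a) (step C a) (step D a).
Proof.
case: a => -[] [] [d1 d2|x|d1|d2|d1|d2||] /=;
  try case: d1 => [|d1]; try case: d2 => [|d2]; try case: x => [[|?] [|?]];
  rewrite /step /=; constructor.
Qed.

Lemma square_foldl s {A B C D} : square A B C D ->
  square (foldl step A s) (foldl step B s) (foldl step C s) (foldl step D s).
Proof.
by elim: s A B C D => //= a s IHs A B C D sq; apply/IHs/square_step.
Qed.

Lemma square_supermodular {A B C D} i : square A B C D ->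
  (stock C i + stock B i <= stock A i + stock D i)%N.
Proof. by case=> *; case: i; rewrite /stock /=; lia. Qed.

Theorem mainTheorem4 (R : realFieldType) (Q1 Q2 : nat)
    (path : seq (R * (bool * bool)))
    (hpos : all (fun e => 0 <= e.1) path)
    (hsorted : sorted (fun e f => e.1 <= f.1) path)
    (t : R) (ht : 0 <= t) (i : bool) :
  (stock (stock_at path (Q1.+1, Q2.+1) t) i)%:Z
    - (stock (stock_at path (Q1.+1, Q2) t) i)%:Z
  >= (stock (stock_at path (Q1, Q2.+1) t) i)%:Z
    - (stock (stock_at path (Q1, Q2) t) i)%:Z.
Proof.
rewrite /stock_at; set arrivals := [seq e.2 | e <- path & e.1 <= t].
have := square_supermodular i (square_foldl arrivals (square_interior Q1 Q2)).
move: (foldl step _ arrivals) (foldl step _ arrivals) => A B.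
move: (foldl step _ arrivals) (foldl step _ arrivals) => C D.
lia.
Qed.
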